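(* Let $D=(V,A)$ be a digraph with minimum in-degree at least 1, and let $\mathcal{L}D=\mathcal{L}_{(A',\phi)}D$ be a partial line digraph of $D$. Then the Fibonacci number of $D$ is less than or equal to the Fibonacci number of $\mathcal{L}D$.
   Context: Digraphs are loopless and without multiple arcs. For a vertex $j$, $\omega^-(j)$ is the set of arcs with terminal vertex $j$; for a set of arcs $\Omega$, $H(\Omega)=\{y:(x,y)\in\Omega\}$. The arc $(x,y)$ is also written $xy$. Partial line digraph: given $D=(V,A)$ with minimum in-degree at least 1, take an arc subset $A'\subseteq A$ and a surjective map $\phi:A\to A'$ such that (i) $H(A')=V$; (ii) $\phi$ restricted to $A'$ is the identity, and for every vertex $j\in V$, $\phi(\omega^-(j))\subseteq\omega^-(j)\cap A'$. The partial line digraph $\mathcal{L}_{(A',\phi)}D$ has vertex set $A'$ and arc set $\{(ij,\phi(j,k)) : ij\in A',\ (j,k)\in A\}$. A set of vertices is independent if no arc joins two of its vertices (equivalently $d(u,v)\ge 2$ for all distinct $u,v$ in it, where $d$ is directed distance). The Fibonacci number of a digraph is the number of its independent vertex sets, including the empty set. *)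

From mathcomp Require Import all_boot.
Set Implicit Arguments. Unset Strict Implicit. Unset Printing Implicit Defensive.

(* A digraph D = (V, A): V a finite type, arcs given by a relation e : rel V
   (arc (x,y) exists iff e x y); no multiple arcs by construction.
   Arcs are represented as pairs in V * V. *)

Definition loopless (V : finType) (e : rel V) : Prop := forall x, ~~ e x x.

Definition min_indeg_ge1 (V : finType) (e : rel V) : Prop :=
  forall j : V, exists i : V, e i j.

Definition is_arc (V : finType) (e : rel V) (a : V * V) : bool := e a.1 a.2.

Definition partial_line_data (V : finType) (e : rel V)
  (A' : {set V * V}) (phi : V * V -> V * V) : Prop :=
  [/\
      forall a, a \in A' -> is_arc e a,
      forall a, is_arc e a -> phi a \in A',
      forall b, b \in A' -> exists2 a, is_arc e a & phi a = b &
      (* (i) H(A') = V *)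
      forall v : V, exists2 a, a \in A' & a.2 = v] /\
  (forall a, a \in A' -> phi a = a) /\
      (* phi(omega^-(j)) is contained in omega^-(j) (and in A') *)
      (forall a, is_arc e a -> (phi a).2 = a.2).

(* Arc relation of the partial line digraph L_(A',phi) D, on vertex set A':
   (ij, phi(j,k)) for ij in A' and (j,k) in A. *)
Definition pld_rel (V : finType) (e : rel V)
  (A' : {set V * V}) (phi : V * V -> V * V) : rel (V * V) :=
  fun a b => [&& a \in A', b \in A' &
    [exists c : V * V, [&& is_arc e c, c.1 == a.2 & phi c == b]]].

Definition independent (T : finType) (r : rel T) (S : {set T}) : bool :=
  [forall u in S, forall v in S, (u != v) ==> ~~ r u v].

Definition fib_on (T : finType) (W : {set T}) (r : rel T) : nat :=
  #|[set S : {set T} | (S \subset W) && independent r S]|.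

Definition fibonacci (V : finType) (e : rel V) : nat := fib_on [set: V] e.

From mathcomp Require Import all_boot.

Set Implicit Arguments.
Unset Strict Implicit.
Unset Printing Implicit Defensive.

(* Pick for every vertex v an arc g v of A' with head v, which exists by (i).
   Since phi preserves heads, an arc g u -> g v of the partial line digraph
   comes from an arc (u, k) of D with head k = v; so g maps independent sets
   of D injectively to independent sets of the partial line digraph. *)

Section IndependentImage.

Variables (T T' : finType) (r : rel T) (r' : rel T') (f : T -> T').
Hypothesis f_inj : injective f.
Hypothesis f_reflect : forall u v, r' (f u) (f v) -> r u v.

Lemma independent_imset (S : {set T}) :
  independent r S -> independent r' (f @: S).
Proof.
move=> /forall_inP indS; apply/forall_inP => _ /imsetP[u Su ->].
apply/forall_inP => _ /imsetP[v Sv ->]; apply/implyP => fuv.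
have uv : u != v by apply: contraNneq fuv => ->.
have /forall_inP/(_ v Sv)/implyP/(_ uv) := indS u Su.
exact: contra (@f_reflect u v).
Qed.

Lemma fib_on_leq_inj (W : {set T}) (W' : {set T'}) :
  f @: W \subset W' -> fib_on W r <= fib_on W' r'.
Proof.
move=> fWW'; rewrite /fib_on -(card_imset _ (imset_inj f_inj)).
apply/subset_leq_card/subsetP => _ /imsetP[S + ->]; rewrite !inE => /andP[SW indS].
by rewrite (subset_trans (imsetS f SW) fWW') independent_imset.
Qed.

End IndependentImage.

Lemma pld_rel_heads (V : finType) (e : rel V) (A' : {set V * V})
    (phi : V * V -> V * V) :
  (forall c, is_arc e c -> (phi c).2 = c.2) ->
  forall a b, pld_rel e A' phi a b -> e a.2 b.2.
Proof.
move=> phi_head a b /and3P[_ _ /existsP[c /and3P[ec /eqP <- /eqP <-]]].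
by rewrite phi_head.
Qed.

Lemma head_section (V : finType) (A' : {set V * V}) :
  (forall v : V, exists2 a, a \in A' & a.2 = v) ->
  {g : V -> V * V | forall v, g v \in A' /\ (g v).2 = v}.
Proof.
move=> headsA'; exists (fun v => odflt (v, v) [pick a in A' | a.2 == v]) => v.
case: pickP => [a /andP[-> /eqP ->] //|noarc] /=.
by have [a A'a av] := headsA' v; move: (noarc a); rewrite A'a av eqxx.
Qed.

Theorem corollary2p2 (V : finType) (e : rel V)
  (A' : {set V * V}) (phi : V * V -> V * V) :
  loopless e -> min_indeg_ge1 e -> partial_line_data e A' phi ->
  fibonacci e <= fib_on A' (pld_rel e A' phi).
Proof.
move=> _ _ [[_ _ _ headsA'] [_ phi_head]].
have [g gP] := head_section headsA'.
have g_inj : injective g.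
  by move=> u v guv; rewrite -(proj2 (gP u)) -(proj2 (gP v)) guv.
rewrite /fibonacci; apply: (fib_on_leq_inj g_inj).
- by move=> u v /(pld_rel_heads phi_head); rewrite !(proj2 (gP _)).
- by apply/subsetP => _ /imsetP[v _ ->]; exact: (proj1 (gP v)).
Qed.
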